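(* Assume $b<0$ and $a>0$, and let $(J,E)\in D_1$, with $q\in(0,\sqrt{a/3})$ such that $J=q(q^2-a)/b$. Then $$\lim_{E\to E_+(J)}T(J,E)=+\infty,\quad \lim_{E\to E_+(J)}\tilde M(J,E)=+\infty,\quad \lim_{E\to E_+(J)}\frac{\tilde M(J,E)}{T(J,E)}=\frac{q^2-a}{2b},$$ $$\lim_{E\to E_+(J)}\tilde P(J,E)=+\infty,\quad \lim_{E\to E_+(J)}\frac{\tilde P(J,E)}{T(J,E)}=\frac{q(q^2-a)}{2b}.$$
   Context: Consider the ODE $u_{xx}+au+b|u|^2u=0$ with $b<0<a$, and the quantities $J=\operatorname{Im}(u\bar u_x)$, $E=\frac12|u_x|^2+\frac a2|u|^2+\frac b4|u|^4$. Let $V_J(r)=\frac{J^2}{2r^2}+a\frac{r^2}{2}+b\frac{r^4}{4}$. For $0<J<\sqrt{\frac{4a^3}{27b^2}}$ write $J=q(q^2-a)/b=Q(Q^2-a)/b$ with $0<q^2<a/3<Q^2<a$, $q,Q>0$; set $E_-(J)=\frac1{4b}(Q^2-a)(3Q^2+a)$ and $E_+(J)=\frac1{4b}(q^2-a)(3q^2+a)$ (local minimum and maximum values of $V_J$). Let $D_1=\{(J,E):0<J<\sqrt{\frac{4a^3}{27b^2}},\ E_-(J)<E<E_+(J)\}$. For $(J,E)\in D_1$, let $r_1<r_2<r_3$ be the positive roots of $E-V_J(r)$ and define $T(J,E)=2\int_{r_1}^{r_2}\frac{dr}{\sqrt{2(E-V_J(r))}}$, $\tilde M(J,E)=\int_{r_1}^{r_2}\frac{r^2\,dr}{\sqrt{2(E-V_J(r))}}$,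 and $\tilde P(J,E)=\frac12 J\,T(J,E)$. *)

From Stdlib Require Import Reals Lra ClassicalEpsilon.
From Coquelicot Require Import Coquelicot.
Open Scope R_scope.

Definition VJ (a b J r : R) : R :=
  J ^ 2 / (2 * r ^ 2) + a * r ^ 2 / 2 + b * r ^ 4 / 4.

(* E_+(J) = (q^2 - a)(3 q^2 + a)/(4 b), where J = q (q^2 - a)/b, 0 < q^2 < a/3 *)
Definition E_plus (a b q : R) : R := (q ^ 2 - a) * (3 * q ^ 2 + a) / (4 * b).

Definition roots_spec (a b J E : R) (t : R * R * R) : Prop :=
  let '(r1, r2, r3) := t in
  0 < r1 /\ r1 < r2 /\ r2 < r3 /\
  E - VJ a b J r1 = 0 /\ E - VJ a b J r2 = 0 /\ E - VJ a b J r3 = 0 /\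
  (forall r, 0 < r -> E - VJ a b J r = 0 -> r = r1 \/ r = r2 \/ r = r3).

(* The root triple (chosen by classical choice; unique whenever it exists) *)
Definition roots (a b J E : R) : R * R * R :=
  epsilon (inhabits (0, 0, 0)) (roots_spec a b J E).

Definition r1 (a b J E : R) : R := fst (fst (roots a b J E)).
Definition r2 (a b J E : R) : R := snd (fst (roots a b J E)).

Definition T (a b J E : R) : R :=
  2 * RInt_gen (fun r => 1 / sqrt (2 * (E - VJ a b J r)))
                 (at_right (r1 a b J E)) (at_left (r2 a b J E)).

Definition Mt (a b J E : R) : R :=
  RInt_gen (fun r => r ^ 2 / sqrt (2 * (E - VJ a b J r)))
           (at_right (r1 a b J E)) (at_left (r2 a b J E)).

Definition Pt (a b J E : R) : R := 1 / 2 * J * T a b J E.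

From Stdlib Require Import Reals Lra Psatz ClassicalEpsilon.
From Coquelicot Require Import Coquelicot.
Open Scope R_scope.

(* With s = r^2, r^2 (E - V_J(r)) is the cubic -(b/4) (s - s0)^2 (s - sg) - (E_+(J) - E) s,
   where s0 = (q^2 - a)/b is a double root and sg = -2q^2/b < s0 a simple one.  For E just
   below E_+(J) its roots are s1 < s2 < s0 < s3, with s2 and s3 both close to s0.  The
   substitution r^2 = s1 + (s2 - s1) sin^2 t turns the singular integrals into proper ones,
   T = 2 int_0^{pi/2} K and M~ = int_0^{pi/2} r^2 K with K = (2 k (s3 - r^2))^{-1/2}, k = -b/4.
   Since s3 - r^2 <= (s3 - s2) + s2 (pi/2 - t)^2, the integral of K diverges logarithmically
   as s3 - s2 -> 0, while (s2 - r^2) K <= sqrt (s2 / (2 k)) keeps s2 T/2 - M~ bounded;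
   hence T -> oo and M~/T -> s0/2.  The statements about P~ = J T/2 follow from J > 0. *)

Lemma IVT_strict (f : R -> R) x y c :
  (forall z, continuous f z) -> x < y -> (f x - c) * (f y - c) < 0 ->
  exists z, x < z < y /\ f z = c.
Proof.
  intros f_cont xy sign.
  destruct (IVT_gen_consistent f x y c f_cont) as [z [zxy fz]].
  { destruct (Rlt_le_dec (f x) c).
    - rewrite Rmin_left, Rmax_right; nra.
    - rewrite Rmin_right, Rmax_left; nra. }
  rewrite Rmin_left, Rmax_right in zxy by lra.
  exists z; split; [|exact fz].
  split; apply Rnot_le_lt; intros z_end.
  - replace z with x in fz by lra; nra.
  - replace z with y in fz by lra; nra.
Qed.

Lemma at_right_preimage (g : R -> R) u w :
  (forall t, continuous g t) -> g u < g w -> u < w ->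
  at_right (g u) (fun x => exists t, u < t < w /\ g t = x).
Proof.
  intros g_cont guw uw.
  assert (gap : 0 < g w - g u) by lra.
  exists (mkposreal _ gap); intros x x_near x_gt; apply Rabs_lt_between' in x_near.
  simpl in x_near.
  destruct (IVT_strict g u w x g_cont uw) as [t [ut gt]]; [nra|].
  exists t; split; [exact ut | exact gt].
Qed.

Lemma at_left_preimage (g : R -> R) w v :
  (forall t, continuous g t) -> g w < g v -> w < v ->
  at_left (g v) (fun y => exists t, w < t < v /\ g t = y).
Proof.
  intros g_cont gwv wv.
  assert (gap : 0 < g v - g w) by lra.
  exists (mkposreal _ gap); intros y y_near y_lt; apply Rabs_lt_between' in y_near.
  simpl in y_near.
  destruct (IVT_strict g w v y g_cont wv) as [t [wt gt]]; [nra|].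
  exists t; split; [exact wt | exact gt].
Qed.

Lemma is_RInt_gen_comp_increasing (f g dg H : R -> R) u v :
  u < v ->
  (forall t, is_derive g t (dg t)) -> (forall t, continuous dg t) ->
  (forall t t', u <= t -> t < t' -> t' <= v -> g t < g t') ->
  (forall x, g u < x < g v -> continuous f x) ->
  (forall t, u < t < v -> dg t * f (g t) = H t) ->
  (forall t, continuous H t) ->
  is_RInt_gen f (at_right (g u)) (at_left (g v)) (RInt H u v).
Proof.
  intros uv g_der dg_cont g_incr f_cont integrand_eq H_cont P [eps HP].
  assert (g_cont : forall t, continuous g t).
  { intro t; apply (@ex_derive_continuous R_AbsRing R_NormedModule); eexists; apply g_der. }
  assert (RInt_cont : continuous (fun z : R * R => RInt H (fst z) (snd z)) (u, v)).
  { apply (continuous_RInt H u v (RInt H)); apply filter_forall; intros z.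
    apply (@RInt_correct R_CompleteNormedModule), (@ex_RInt_continuous R_CompleteNormedModule).
    intros; apply H_cont. }
  destruct (proj1 (filterlim_locally _ _) RInt_cont eps) as [del Hdel].
  set (w := Rmin del ((v - u) / 2)).
  assert (w_pos : 0 < w) by (apply Rmin_pos; [apply cond_pos | lra]).
  assert (w_del : w <= del) by apply Rmin_l.
  assert (w_half : w <= (v - u) / 2) by apply Rmin_r.
  apply Filter_prod with (fun x => exists t, u < t < u + w /\ g t = x)
                         (fun y => exists t, v - w < t < v /\ g t = y).
  - apply at_right_preimage; [exact g_cont | apply g_incr | ]; lra.
  - apply at_left_preimage; [exact g_cont | apply g_incr | ]; lra.
  - intros x y [t [t_range <-]] [t' [t'_range <-]]; simpl.
    exists (RInt H t t'); split.
    + assert (g_mono : forall z, t <= z <= t' -> g u < g z < g v).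
      { intros z zt; split; apply g_incr; lra. }
      assert (RInt_subst : RInt f (g t) (g t') = RInt H t t').
      { symmetry; apply is_RInt_unique.
        apply (is_RInt_ext (fun z => scal (dg z) (f (g z)))).
        - rewrite Rmin_left, Rmax_right by lra.
          intros z zt; change (scal ?a ?b) with (a * b); apply integrand_eq; lra.
        - apply (@is_RInt_comp R_CompleteNormedModule);
            rewrite Rmin_left, Rmax_right by lra; intros z zt.
          + apply f_cont, g_mono; lra.
          + split; [apply g_der | apply dg_cont]. }
      rewrite <- RInt_subst; apply (@RInt_correct R_CompleteNormedModule).
      apply (@ex_RInt_continuous R_CompleteNormedModule).
      assert (gtt' : g t < g t') by (apply g_incr; lra).
      rewrite Rmin_left, Rmax_right by lra; intros x xr.
      apply f_cont; pose proof (g_mono t); pose proof (g_mono t'); lra.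
    + apply HP, (Hdel (t, t')); split; apply Rabs_lt_between'; simpl; lra.
Qed.

Lemma is_RInt_inv_affine c A B L :
  0 < c -> 0 < A -> 0 < B -> 0 <= L ->
  is_RInt (fun t => / (c * (A + B * (L - t)))) 0 L ((ln (A + B * L) - ln A) / (c * B)).
Proof.
  intros c_pos A_pos B_pos L_pos.
  set (F := fun t => - ln (A + B * (L - t)) / (c * B)).
  replace ((ln (A + B * L) - ln A) / (c * B)) with (minus (F L) (F 0)).
  2: { unfold F, minus, plus, opp; simpl.
       rewrite Rminus_diag, Rmult_0_r, Rplus_0_r, Rminus_0_r; field; lra. }
  apply (@is_RInt_derive R_CompleteNormedModule);
    rewrite Rmin_left, Rmax_right by lra; intros t t_range;
    assert (0 <= B * (L - t)) by (apply Rmult_le_pos; lra).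
  - unfold F; auto_derive; [lra|]; field; lra.
  - apply (@ex_derive_continuous R_AbsRing R_NormedModule); auto_derive.
    assert (0 < c * (A + B * (L - t))) by (apply Rmult_lt_0_compat; lra).
    unfold Rminus in *; lra.
Qed.

Lemma filterlim_mult_p_infty {T : Type} {F : (T -> Prop) -> Prop} {FF : Filter F} (f g : T -> R) l :
  0 < l -> filterlim f F (locally l) -> filterlim g F (Rbar_locally p_infty) ->
  filterlim (fun x => f x * g x) F (Rbar_locally p_infty).
Proof.
  intros l_pos f_lim g_lim.
  apply (filterlim_comp_2 f g Rmult f_lim g_lim), (filterlim_Rbar_mult l p_infty p_infty).
  apply is_Rbar_mult_sym, is_Rbar_mult_p_infty_pos; exact l_pos.
Qed.

Lemma quadratic_three_zeros c2 c1 c0 x y z :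
  x < y -> y < z ->
  c2 * x ^ 2 + c1 * x + c0 = 0 -> c2 * y ^ 2 + c1 * y + c0 = 0 -> c2 * z ^ 2 + c1 * z + c0 = 0 ->
  c2 = 0 /\ c1 = 0 /\ c0 = 0.
Proof.
  intros xy yz zx zy zz.
  assert (dxy : (x - y) * (c2 * (x + y) + c1) = 0) by lra.
  assert (dyz : (y - z) * (c2 * (y + z) + c1) = 0) by lra.
  apply Rmult_integral in dxy as [|dxy]; [lra|].
  apply Rmult_integral in dyz as [|dyz]; [lra|].
  assert (c2_zero : (x - z) * c2 = 0) by lra.
  apply Rmult_integral in c2_zero as [|c2_zero]; [lra|].
  subst c2; assert (c1 = 0) by lra; subst c1; repeat split; lra.
Qed.

Lemma cubic_factor_of_roots k c2 c1 c0 x y z :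
  x < y -> y < z ->
  k * x ^ 3 + c2 * x ^ 2 + c1 * x + c0 = 0 ->
  k * y ^ 3 + c2 * y ^ 2 + c1 * y + c0 = 0 ->
  k * z ^ 3 + c2 * z ^ 2 + c1 * z + c0 = 0 ->
  forall s, k * s ^ 3 + c2 * s ^ 2 + c1 * s + c0 = k * (s - x) * (s - y) * (s - z).
Proof.
  intros xy yz zx zy zz s.
  assert (diff : forall w, k * w ^ 3 + c2 * w ^ 2 + c1 * w + c0 - k * (w - x) * (w - y) * (w - z)
     = (c2 + k * (x + y + z)) * w ^ 2 + (c1 - k * (x * y + x * z + y * z)) * w
       + (c0 + k * x * y * z)) by (intro; ring).
  destruct (quadratic_three_zeros (c2 + k * (x + y + z)) (c1 - k * (x * y + x * z + y * z))
              (c0 + k * x * y * z) x y z) as (e2 & e1 & e0);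
    try (rewrite <- diff; lra); try assumption.
  specialize (diff s); rewrite e2, e1, e0 in diff; lra.
Qed.

Lemma three_roots_near_double_root k s0 sg d eta :
  0 < k -> 0 < sg -> sg < s0 -> 0 < eta -> eta <= (s0 - sg) / 2 ->
  0 < d -> d < k * eta ^ 2 * (s0 - sg) / (8 * s0) ->
  exists s1 s2 s3,
    0 < s1 /\ s1 < s0 - eta /\ s0 - eta < s2 /\ s2 < s0 /\ s0 < s3 /\ s3 < s0 + eta /\
    forall s, k * (s - s0) ^ 2 * (s - sg) - d * s = k * (s - s1) * (s - s2) * (s - s3).
Proof.
  intros k_pos sg_pos sg_s0 eta_pos eta_small d_pos d_small.
  set (P := fun s => k * (s - s0) ^ 2 * (s - sg) - d * s).
  (* The bound on d makes P change sign on each of ]0, s0 - eta[, ]s0 - eta, s0[, ]s0, s0 + eta[. *)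
  assert (P_cont : forall s, continuous P s).
  { intro s; apply (@ex_derive_continuous R_AbsRing R_NormedModule); unfold P; auto_derive; auto. }
  assert (keta : 0 < k * eta ^ 2) by (apply Rmult_lt_0_compat; [|apply pow_lt]; lra).
  assert (d_s0 : d * s0 < k * eta ^ 2 * (s0 - sg) / 8).
  { apply (Rmult_lt_compat_r s0) in d_small; [|lra].
    replace (k * eta ^ 2 * (s0 - sg) / (8 * s0) * s0) with (k * eta ^ 2 * (s0 - sg) / 8)
      in d_small by (field; lra); exact d_small. }
  assert (P0 : P 0 < 0).
  { assert (0 < k * s0 ^ 2 * sg) by (repeat apply Rmult_lt_0_compat; try apply pow_lt; lra).
    unfold P; lra. }
  assert (P1 : 0 < P (s0 - eta)).
  { unfold P; replace ((s0 - eta - s0) ^ 2) with (eta ^ 2) by ring; nra. }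
  assert (P2 : P s0 < 0) by (unfold P; replace (s0 - s0) with 0 by ring; nra).
  assert (P3 : 0 < P (s0 + eta)).
  { unfold P; replace ((s0 + eta - s0) ^ 2) with (eta ^ 2) by ring; nra. }
  destruct (IVT_strict P 0 (s0 - eta) 0) as [s1 [s1_range P_s1]]; [auto | lra | nra |].
  destruct (IVT_strict P (s0 - eta) s0 0) as [s2 [s2_range P_s2]]; [auto | lra | nra |].
  destruct (IVT_strict P s0 (s0 + eta) 0) as [s3 [s3_range P_s3]]; [auto | lra | nra |].
  exists s1, s2, s3; repeat split; try lra.
  assert (expand : forall w, P w = k * w ^ 3 + (- k * (2 * s0 + sg)) * w ^ 2
                               + (k * (s0 ^ 2 + 2 * s0 * sg) - d) * w + (- k * s0 ^ 2 * sg))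
    by (intro; unfold P; ring).
  intros s; change (P s = k * (s - s1) * (s - s2) * (s - s3)); rewrite expand.
  apply cubic_factor_of_roots; try lra; rewrite <- expand; assumption.
Qed.

Definition sin2_interp (s1 s2 t : R) : R := s1 + (s2 - s1) * sin t ^ 2.

Definition r2_factorization (k s1 s2 s3 : R) (W : R -> R) : Prop :=
  forall r, 0 < r -> r ^ 2 * W r = k * (r ^ 2 - s1) * (r ^ 2 - s2) * (r ^ 2 - s3).

Definition period_kernel (k s1 s2 s3 t : R) : R :=
  / sqrt (2 * k * (s3 - sin2_interp s1 s2 t)).

Lemma sin2_interp_0 s1 s2 : sin2_interp s1 s2 0 = s1.
Proof. unfold sin2_interp; rewrite sin_0; ring. Qed.

Lemma sin2_interp_PI2 s1 s2 : sin2_interp s1 s2 (PI / 2) = s2.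
Proof. unfold sin2_interp; rewrite sin_PI2; ring. Qed.

Lemma sin2_interp_cos s1 s2 t : s2 - sin2_interp s1 s2 t = (s2 - s1) * cos t ^ 2.
Proof.
  unfold sin2_interp; pose proof (sin2_cos2 t) as sc; unfold Rsqr in sc.
  replace (sin t ^ 2) with (1 - cos t ^ 2) by (simpl; lra); ring.
Qed.

Section Sin2Substitution.

Variables k s1 s2 s3 : R.
Hypotheses (k_pos : 0 < k) (s1_pos : 0 < s1) (s12 : s1 < s2) (s23 : s2 < s3).

Lemma sin2_interp_bounds t : s1 <= sin2_interp s1 s2 t <= s2.
Proof.
  pose proof (sin2_interp_cos s1 s2 t); unfold sin2_interp in *.
  pose proof (pow2_ge_0 (sin t)); pose proof (pow2_ge_0 (cos t)); nra.
Qed.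

Lemma sin2_interp_increasing t t' :
  0 <= t -> t < t' -> t' <= PI / 2 -> sin2_interp s1 s2 t < sin2_interp s1 s2 t'.
Proof.
  intros t0 tt' t'PI; pose proof PI_RGT_0; unfold sin2_interp.
  assert (sin t < sin t') by (apply sin_increasing_1; lra).
  assert (0 <= sin t) by (apply sin_ge_0; lra).
  apply Rplus_lt_compat_l, Rmult_lt_compat_l; [lra | simpl; nra].
Qed.

Lemma is_derive_sqrt_sin2_interp t :
  is_derive (fun t => sqrt (sin2_interp s1 s2 t)) t
            ((s2 - s1) * sin t * cos t / sqrt (sin2_interp s1 s2 t)).
Proof.
  pose proof (sin2_interp_bounds t); unfold sin2_interp in *.
  auto_derive; [lra|].
  assert (0 < sqrt (s1 + (s2 - s1) * sin t ^ 2)) by (apply sqrt_lt_R0; lra).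
  simpl; field; simpl in *; lra.
Qed.

Lemma continuous_period_kernel t : continuous (period_kernel k s1 s2 s3) t.
Proof.
  pose proof (sin2_interp_bounds t).
  apply (@ex_derive_continuous R_AbsRing R_NormedModule); unfold period_kernel, sin2_interp in *.
  assert (0 < 2 * k * (s3 - (s1 + (s2 - s1) * sin t ^ 2))) by (apply Rmult_lt_0_compat; lra).
  assert (0 < sqrt (2 * k * (s3 - (s1 + (s2 - s1) * sin t ^ 2)))) by (apply sqrt_lt_R0; lra).
  auto_derive; replace (sin t * (sin t * 1)) with (sin t ^ 2) by ring.
  unfold Rminus in *; repeat split; lra.
Qed.

Lemma sin2_subst_integrand (W h : R -> R) t :
  r2_factorization k s1 s2 s3 W ->
  0 < t < PI / 2 ->
  (s2 - s1) * sin t * cos t / sqrt (sin2_interp s1 s2 t)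
    * (h (sqrt (sin2_interp s1 s2 t)) / sqrt (2 * W (sqrt (sin2_interp s1 s2 t))))
  = h (sqrt (sin2_interp s1 s2 t)) * period_kernel k s1 s2 s3 t.
Proof.
  intros W_factor t_range; pose proof PI_RGT_0.
  assert (sin_pos : 0 < sin t) by (apply sin_gt_0; lra).
  assert (cos_pos : 0 < cos t) by (apply cos_gt_0; lra).
  pose proof (sin2_interp_bounds t) as S_bounds; pose proof (sin2_interp_cos s1 s2 t) as S_cos.
  unfold period_kernel; set (S := sin2_interp s1 s2 t) in *.
  assert (S_sin : S - s1 = (s2 - s1) * sin t ^ 2) by (unfold S, sin2_interp; ring).
  assert (rho_pos : 0 < sqrt S) by (apply sqrt_lt_R0; lra).
  assert (rho_sq : sqrt S ^ 2 = S) by (apply pow2_sqrt; lra).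
  assert (X_pos : 0 < 2 * k * (s3 - S)) by (apply Rmult_lt_0_compat; lra).
  specialize (W_factor (sqrt S) rho_pos); rewrite rho_sq in W_factor.
  set (rho := sqrt S) in *.
  set (D := (s2 - s1) * sin t * cos t / rho).
  assert (D_pos : 0 < D)
    by (unfold D; apply Rdiv_lt_0_compat; [repeat apply Rmult_lt_0_compat|]; lra).
  assert (W_eq : 2 * W rho = D ^ 2 * (2 * k * (s3 - S))).
  { apply (Rmult_eq_reg_l S); [|lra].
    replace (S * (2 * W rho)) with (2 * (S * W rho)) by ring.
    rewrite W_factor, S_sin, <- (Ropp_involutive (S - s2)), Ropp_minus_distr, S_cos.
    unfold D; rewrite <- rho_sq; field; lra. }
  rewrite W_eq, sqrt_mult, sqrt_pow2 by (try apply pow2_ge_0; lra).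
  assert (0 < sqrt (2 * k * (s3 - S))) by (apply sqrt_lt_R0; lra).
  field; lra.
Qed.

Lemma r2_factorization_pos (W : R -> R) r :
  r2_factorization k s1 s2 s3 W ->
  sqrt s1 < r < sqrt s2 -> 0 < W r.
Proof.
  intros W_factor r_range.
  pose proof (sqrt_pos s1).
  assert (r_pos : 0 < r) by lra.
  assert (lo : s1 < r ^ 2) by (rewrite <- (pow2_sqrt s1) by lra; simpl; nra).
  assert (hi : r ^ 2 < s2) by (rewrite <- (pow2_sqrt s2) by lra; simpl; nra).
  specialize (W_factor r r_pos).
  assert (0 < r ^ 2) by nra.
  assert (0 < k * (r ^ 2 - s1) * (r ^ 2 - s2) * (r ^ 2 - s3)).
  { replace (k * (r ^ 2 - s1) * (r ^ 2 - s2) * (r ^ 2 - s3))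
      with (k * (r ^ 2 - s1) * ((s2 - r ^ 2) * (s3 - r ^ 2))) by ring.
    repeat apply Rmult_lt_0_compat; lra. }
  nra.
Qed.

Lemma is_RInt_gen_sin2_subst (W h : R -> R) :
  r2_factorization k s1 s2 s3 W ->
  (forall r, 0 < r -> continuous W r) -> (forall r, continuous h r) ->
  is_RInt_gen (fun r => h r / sqrt (2 * W r)) (at_right (sqrt s1)) (at_left (sqrt s2))
    (RInt (fun t => h (sqrt (sin2_interp s1 s2 t)) * period_kernel k s1 s2 s3 t) 0 (PI / 2)).
Proof.
  intros W_factor W_cont h_cont; pose proof PI_RGT_0.
  pose proof (is_RInt_gen_comp_increasing (fun r => h r / sqrt (2 * W r))
    (fun t => sqrt (sin2_interp s1 s2 t))
    (fun t => (s2 - s1) * sin t * cos t / sqrt (sin2_interp s1 s2 t))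
    (fun t => h (sqrt (sin2_interp s1 s2 t)) * period_kernel k s1 s2 s3 t) 0 (PI / 2)) as change_of_variables.
  cbv beta in change_of_variables.
  rewrite sin2_interp_0, sin2_interp_PI2 in change_of_variables.
  apply change_of_variables; clear change_of_variables.
  - lra.
  - exact is_derive_sqrt_sin2_interp.
  - intros t; apply (@ex_derive_continuous R_AbsRing R_NormedModule).
    pose proof (sin2_interp_bounds t); unfold sin2_interp in *.
    assert (0 < sqrt (s1 + (s2 - s1) * sin t ^ 2)) by (apply sqrt_lt_R0; lra).
    auto_derive; replace (sin t * (sin t * 1)) with (sin t ^ 2) by ring; repeat split; lra.
  - intros t t' t0 tt' t'PI; apply sqrt_lt_1.
    + pose proof (sin2_interp_bounds t); lra.
    + pose proof (sin2_interp_bounds t'); lra.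
    + apply sin2_interp_increasing; lra.
  - intros r r_range.
    assert (W_pos : 0 < W r) by (apply r2_factorization_pos; assumption).
    assert (r_pos : 0 < r) by (pose proof (sqrt_pos s1); lra).
    assert (0 < sqrt (2 * W r)) by (apply sqrt_lt_R0; lra).
    apply (continuous_mult h (fun r => / sqrt (2 * W r))); [apply h_cont|].
    apply continuous_Rinv_comp; [|lra].
    apply continuous_sqrt_comp, (continuous_mult (fun _ => 2) W);
      [apply continuous_const | apply W_cont, r_pos].
  - intros t t_range; apply sin2_subst_integrand; assumption.
  - intros t; apply (continuous_mult (fun t => h (sqrt (sin2_interp s1 s2 t)))).
    + apply (continuous_comp (fun t => sqrt (sin2_interp s1 s2 t)) h); [|apply h_cont].
      apply (@ex_derive_continuous R_AbsRing R_NormedModule); eexists;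
        apply is_derive_sqrt_sin2_interp.
    + apply continuous_period_kernel.
Qed.

Lemma ex_RInt_period_kernel a b : ex_RInt (period_kernel k s1 s2 s3) a b.
Proof.
  apply (@ex_RInt_continuous R_CompleteNormedModule); intros; apply continuous_period_kernel.
Qed.

Lemma ex_RInt_sin2_interp_kernel a b :
  ex_RInt (fun t => sin2_interp s1 s2 t * period_kernel k s1 s2 s3 t) a b.
Proof.
  apply (@ex_RInt_continuous R_CompleteNormedModule); intros t _.
  apply (continuous_mult (sin2_interp s1 s2)); [|apply continuous_period_kernel].
  apply (@ex_derive_continuous R_AbsRing R_NormedModule); unfold sin2_interp; auto_derive; auto.
Qed.

Lemma period_kernel_ge A B t :
  0 < A -> 0 <= B -> s3 - s2 <= A ^ 2 -> s2 <= B ^ 2 -> 0 < t < PI / 2 ->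
  / (sqrt (2 * k) * (A + B * (PI / 2 - t))) <= period_kernel k s1 s2 s3 t.
Proof.
  intros A_pos B_pos gap s2B t_range; pose proof PI_RGT_0.
  set (u := PI / 2 - t).
  assert (cos_pos : 0 < cos t) by (apply cos_gt_0; lra).
  assert (cos_u : cos t < u) by (unfold u; rewrite <- sin_shift; apply sin_lt_x; lra).
  pose proof (sin2_interp_bounds t); pose proof (sin2_interp_cos s1 s2 t).
  set (S := sin2_interp s1 s2 t) in *.
  assert (dist : s3 - S <= (A + B * u) ^ 2).
  { assert ((s2 - s1) * cos t ^ 2 <= B ^ 2 * u ^ 2) by (simpl; apply Rmult_le_compat; nra).
    assert (0 <= A * B * u) by (apply Rmult_le_pos; [apply Rmult_le_pos|]; lra).
    nra. }
  unfold period_kernel; fold S.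
  apply Rinv_le_contravar; [apply sqrt_lt_R0, Rmult_lt_0_compat; lra|].
  rewrite sqrt_mult by lra; apply Rmult_le_compat_l; [apply sqrt_pos|].
  rewrite <- (sqrt_pow2 (A + B * u)) by nra; apply sqrt_le_1_alt, dist.
Qed.

Lemma sin2_interp_kernel_bounds B t :
  0 <= B -> s2 <= B ^ 2 ->
  s2 * period_kernel k s1 s2 s3 t - B / sqrt (2 * k)
    <= sin2_interp s1 s2 t * period_kernel k s1 s2 s3 t
    <= s2 * period_kernel k s1 s2 s3 t.
Proof.
  intros B_pos s2B; pose proof (sin2_interp_bounds t).
  assert (c_pos : 0 < sqrt (2 * k)) by (apply sqrt_lt_R0; lra).
  unfold period_kernel; set (S := sin2_interp s1 s2 t) in *.
  assert (y_pos : 0 < sqrt (s3 - S)) by (apply sqrt_lt_R0; lra).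
  rewrite sqrt_mult by lra.
  assert (0 < / (sqrt (2 * k) * sqrt (s3 - S))) by (apply Rinv_0_lt_compat, Rmult_lt_0_compat; lra).
  split; [|apply Rmult_le_compat_r; lra].
  assert (sqrt_x : sqrt (s2 - S) <= B)
    by (rewrite <- (sqrt_pow2 B) by lra; apply sqrt_le_1_alt; lra).
  assert (x_le : s2 - S <= B * sqrt (s3 - S)).
  { rewrite <- (sqrt_sqrt (s2 - S)) by lra.
    apply Rmult_le_compat; try apply sqrt_pos; [exact sqrt_x | apply sqrt_le_1_alt; lra]. }
  assert ((s2 - S) * / (sqrt (2 * k) * sqrt (s3 - S)) <= B / sqrt (2 * k)).
  { apply (Rmult_le_reg_r (sqrt (s3 - S))); [lra|].
    replace ((s2 - S) * / (sqrt (2 * k) * sqrt (s3 - S)) * sqrt (s3 - S))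
      with ((s2 - S) / sqrt (2 * k)) by (field; lra).
    replace (B / sqrt (2 * k) * sqrt (s3 - S)) with (B * sqrt (s3 - S) / sqrt (2 * k))
      by (field; lra).
    apply Rmult_le_compat_r; [apply Rlt_le, Rinv_0_lt_compat|]; lra. }
  lra.
Qed.

Lemma integral_period_kernel_ge_log A B :
  0 < A -> 0 < B -> s3 - s2 <= A ^ 2 -> s2 <= B ^ 2 ->
  (ln (A + B * (PI / 2)) - ln A) / (sqrt (2 * k) * B) <= RInt (period_kernel k s1 s2 s3) 0 (PI / 2).
Proof.
  intros A_pos B_pos gap s2B; pose proof PI_RGT_0.
  assert (c_pos : 0 < sqrt (2 * k)) by (apply sqrt_lt_R0; lra).
  pose proof (is_RInt_inv_affine (sqrt (2 * k)) A B (PI / 2) c_pos A_pos B_pos ltac:(lra)) as log.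
  rewrite <- (is_RInt_unique _ _ _ _ log).
  apply RInt_le; [lra | eexists; exact log | apply ex_RInt_period_kernel |].
  intros t t_range; apply period_kernel_ge; lra.
Qed.

Lemma integral_sin2_interp_kernel_bounds B :
  0 <= B -> s2 <= B ^ 2 ->
  s2 * RInt (period_kernel k s1 s2 s3) 0 (PI / 2) - PI / 2 * (B / sqrt (2 * k))
    <= RInt (fun t => sin2_interp s1 s2 t * period_kernel k s1 s2 s3 t) 0 (PI / 2)
    <= s2 * RInt (period_kernel k s1 s2 s3) 0 (PI / 2).
Proof.
  intros B_pos s2B; pose proof PI_RGT_0.
  assert (scaled : is_RInt (fun t => s2 * period_kernel k s1 s2 s3 t) 0 (PI / 2)
                     (s2 * RInt (period_kernel k s1 s2 s3) 0 (PI / 2))).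
  { apply (@is_RInt_scal R_CompleteNormedModule), (@RInt_correct R_CompleteNormedModule).
    apply ex_RInt_period_kernel. }
  assert (shifted : is_RInt (fun t => s2 * period_kernel k s1 s2 s3 t - B / sqrt (2 * k)) 0 (PI / 2)
     (s2 * RInt (period_kernel k s1 s2 s3) 0 (PI / 2) - PI / 2 * (B / sqrt (2 * k)))).
  { apply (@is_RInt_minus R_CompleteNormedModule); [exact scaled|].
    replace (PI / 2) with (PI / 2 - 0) at 2 by ring.
    apply (@is_RInt_const R_CompleteNormedModule). }
  split.
  - rewrite <- (is_RInt_unique _ _ _ _ shifted).
    apply RInt_le; [lra | eexists; exact shifted | apply ex_RInt_sin2_interp_kernel |].
    intros t _; apply (sin2_interp_kernel_bounds B); assumption.
  - rewrite <- (is_RInt_unique _ _ _ _ scaled).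
    apply RInt_le; [lra | apply ex_RInt_sin2_interp_kernel | eexists; exact scaled |].
    intros t _; apply (sin2_interp_kernel_bounds B); assumption.
Qed.

End Sin2Substitution.

Lemma integral_period_kernel_unbounded k B M :
  0 < k -> 0 < B -> exists eta, 0 < eta /\
  forall s1 s2 s3, 0 < s1 -> s1 < s2 -> s2 < s3 -> s2 <= B ^ 2 -> s3 - s2 < eta ->
  M <= RInt (period_kernel k s1 s2 s3) 0 (PI / 2).
Proof.
  intros k_pos B_pos; pose proof PI_RGT_0.
  set (c := sqrt (2 * k)).
  assert (c_pos : 0 < c) by (apply sqrt_lt_R0; lra).
  set (A := B * (PI / 2) * exp (- (c * B * Rabs M))).
  assert (A_pos : 0 < A) by (apply Rmult_lt_0_compat; [nra | apply exp_pos]).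
  assert (ln_A : ln A = ln (B * (PI / 2)) - c * B * Rabs M).
  { assert (0 < B * (PI / 2)) by nra.
    unfold A; rewrite ln_mult, ln_exp; [ring | assumption | apply exp_pos]. }
  exists (A ^ 2); split; [nra|].
  intros s1 s2 s3 s1_pos s12 s23 s2B gap.
  eapply Rle_trans;
    [|apply (integral_period_kernel_ge_log k s1 s2 s3 k_pos s1_pos s12 s23 A B); lra].
  fold c.
  assert (ln (B * (PI / 2)) <= ln (A + B * (PI / 2))) by (apply ln_le; nra).
  apply Rle_trans with (Rabs M); [apply Rle_abs|].
  replace (Rabs M) with (c * B * Rabs M / (c * B)) by (field; nra).
  apply Rmult_le_compat_r; [apply Rlt_le, Rinv_0_lt_compat; nra | lra].
Qed.

Lemma roots_spec_unique a b J E t t' :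
  roots_spec a b J E t -> roots_spec a b J E t' -> t = t'.
Proof.
  destruct t as [[x1 x2] x3], t' as [[y1 y2] y3]; simpl.
  intros (x1_pos & x12 & x23 & zx1 & zx2 & zx3 & x_all)
         (y1_pos & y12 & y23 & zy1 & zy2 & zy3 & y_all).
  pose proof (y_all x1 ltac:(lra) zx1); pose proof (y_all x2 ltac:(lra) zx2);
  pose proof (y_all x3 ltac:(lra) zx3); pose proof (x_all y1 ltac:(lra) zy1);
  pose proof (x_all y3 ltac:(lra) zy3).
  assert (x1 = y1) by intuition lra.
  assert (x3 = y3) by intuition lra.
  assert (x2 = y2) by intuition lra.
  subst; reflexivity.
Qed.

Lemma roots_eq a b J E t : roots_spec a b J E t -> roots a b J E = t.
Proof.
  intro spec; apply (roots_spec_unique a b J E); [|exact spec].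
  unfold roots; apply epsilon_spec; exists t; exact spec.
Qed.

Lemma roots_spec_of_factor a b J E k s1 s2 s3 :
  0 < k -> 0 < s1 -> s1 < s2 -> s2 < s3 ->
  r2_factorization k s1 s2 s3 (fun r => E - VJ a b J r) ->
  roots_spec a b J E (sqrt s1, sqrt s2, sqrt s3).
Proof.
  intros k_pos s1_pos s12 s23 factor; red in factor; cbv beta in factor; simpl.
  assert (root_sqrt : forall s, 0 < s -> (s = s1 \/ s = s2 \/ s = s3) -> E - VJ a b J (sqrt s) = 0).
  { intros s s_pos s_root.
    specialize (factor (sqrt s) (sqrt_lt_R0 s s_pos)); rewrite pow2_sqrt in factor by lra.
    replace (k * (s - s1) * (s - s2) * (s - s3)) with 0 in factor
      by (destruct s_root as [-> | [-> | ->]]; ring).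
    apply (Rmult_eq_reg_l s); lra. }
  repeat split; try (apply root_sqrt; lra); try (apply sqrt_lt_1; lra); try (apply sqrt_lt_R0; lra).
  intros r r_pos r_root; specialize (factor r r_pos).
  rewrite r_root, Rmult_0_r in factor.
  assert (r_sqrt : r = sqrt (r ^ 2)) by (rewrite sqrt_pow2; lra).
  rewrite r_sqrt.
  assert (k * ((r ^ 2 - s1) * ((r ^ 2 - s2) * (r ^ 2 - s3))) = 0) as prod by lra.
  repeat (apply Rmult_integral in prod; destruct prod as [prod | prod]); [lra | ..].
  - left; f_equal; lra.
  - right; left; f_equal; lra.
  - right; right; f_equal; lra.
Qed.

Lemma T_Mt_of_factor a b J E k s1 s2 s3 :
  0 < k -> 0 < s1 -> s1 < s2 -> s2 < s3 ->
  r2_factorization k s1 s2 s3 (fun r => E - VJ a b J r) ->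
  T a b J E = 2 * RInt (period_kernel k s1 s2 s3) 0 (PI / 2) /\
  Mt a b J E = RInt (fun t => sin2_interp s1 s2 t * period_kernel k s1 s2 s3 t) 0 (PI / 2).
Proof.
  intros k_pos s1_pos s12 s23 factor.
  assert (W_cont : forall r, 0 < r -> continuous (fun r => E - VJ a b J r) r).
  { intros r r_pos; apply (@ex_derive_continuous R_AbsRing R_NormedModule); unfold VJ.
    auto_derive; nra. }
  unfold T, Mt, r1, r2.
  rewrite (roots_eq a b J E _
            (roots_spec_of_factor a b J E k s1 s2 s3 k_pos s1_pos s12 s23 factor)).
  cbn [fst snd]; split.
  - erewrite is_RInt_gen_unique
      by (apply (is_RInt_gen_sin2_subst k s1 s2 s3 k_pos s1_pos s12 s23 _ (fun _ => 1));
          [exact factor | exact W_cont | intros; apply continuous_const]).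
    f_equal; apply RInt_ext; intros; apply Rmult_1_l.
  - erewrite is_RInt_gen_unique
      by (apply (is_RInt_gen_sin2_subst k s1 s2 s3 k_pos s1_pos s12 s23 _ (fun r => r ^ 2));
          [exact factor | exact W_cont |
           intros; apply (@ex_derive_continuous R_AbsRing R_NormedModule); auto_derive; auto]).
    apply RInt_ext; intros t _; rewrite pow2_sqrt; [reflexivity|].
    pose proof (sin2_interp_bounds s1 s2 s12 t); lra.
Qed.

Section NearEPlus.

Variables a b q : R.
Hypotheses (b_neg : b < 0) (q_pos : 0 < q) (q_small : q ^ 2 < a / 3).

Let J := q * (q ^ 2 - a) / b.
Let s0 := (q ^ 2 - a) / b.
Let sg := - 2 * q ^ 2 / b.
Let k := - b / 4.

Lemma VJ_cubic E r :
  0 < r ->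
  r ^ 2 * (E - VJ a b J r) = k * (r ^ 2 - s0) ^ 2 * (r ^ 2 - sg) - (E_plus a b q - E) * r ^ 2.
Proof. intro r_pos; unfold VJ, E_plus, J, s0, sg, k; field; lra. Qed.

Lemma simple_root_lt_double_root : 0 < sg /\ sg < s0.
Proof.
  unfold sg, s0; split.
  - apply Rdiv_neg_neg; nra.
  - apply (Rmult_lt_reg_r (- b)); [lra|].
    replace (- 2 * q ^ 2 / b * - b) with (2 * q ^ 2) by (field; lra).
    replace ((q ^ 2 - a) / b * - b) with (a - q ^ 2) by (field; lra); lra.
Qed.

Lemma T_Mt_near_E_plus eta :
  0 < eta -> at_left (E_plus a b q) (fun E => exists s1 s2 s3,
    0 < s1 /\ s1 < s2 /\ s2 < s3 /\ s0 - eta < s2 /\ s2 < s0 /\ s3 < s0 + eta /\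
    T a b J E = 2 * RInt (period_kernel k s1 s2 s3) 0 (PI / 2) /\
    Mt a b J E = RInt (fun t => sin2_interp s1 s2 t * period_kernel k s1 s2 s3 t) 0 (PI / 2)).
Proof.
  intros eta_pos; destruct simple_root_lt_double_root as [sg_pos sg_s0].
  assert (k_pos : 0 < k) by (unfold k; lra).
  set (eta' := Rmin eta ((s0 - sg) / 2)).
  assert (eta'_pos : 0 < eta') by (apply Rmin_pos; lra).
  assert (eta'_eta : eta' <= eta) by apply Rmin_l.
  assert (eta'_gap : eta' <= (s0 - sg) / 2) by apply Rmin_r.
  assert (window : 0 < k * eta' ^ 2 * (s0 - sg) / (8 * s0)).
  { apply Rdiv_lt_0_compat; [repeat apply Rmult_lt_0_compat; try apply pow_lt |]; lra. }
  exists (mkposreal _ window); intros E E_near E_lt.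
  apply Rabs_lt_between' in E_near; simpl in E_near.
  destruct (three_roots_near_double_root k s0 sg (E_plus a b q - E) eta')
    as (s1 & s2 & s3 & s1_pos & s1_lt & s2_gt & s2_lt & s3_gt & s3_lt & factor); try lra.
  assert (s12 : s1 < s2) by lra; assert (s23 : s2 < s3) by lra.
  exists s1, s2, s3; repeat split; try lra;
    apply (T_Mt_of_factor a b J E k s1 s2 s3 k_pos s1_pos s12 s23);
    intros r r_pos; rewrite VJ_cubic, factor by exact r_pos; reflexivity.
Qed.

Lemma T_tends_to_p_infty : filterlim (T a b J) (at_left (E_plus a b q)) (Rbar_locally p_infty).
Proof.
  intros P [M HM]; destruct simple_root_lt_double_root as [sg_pos sg_s0].
  destruct (integral_period_kernel_unbounded k (sqrt s0) (M / 2 + 1)) as [eta [eta_pos large]];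
    [unfold k; lra | apply sqrt_lt_R0; lra |].
  refine (filter_imp _ _ _ (T_Mt_near_E_plus (eta / 2) _)); [|lra].
  intros E (s1 & s2 & s3 & s1_pos & s12 & s23 & s2_gt & s2_lt & s3_lt & T_eq & _).
  apply HM; rewrite T_eq.
  assert (M / 2 + 1 <= RInt (period_kernel k s1 s2 s3) 0 (PI / 2))
    by (apply large; try rewrite pow2_sqrt; lra).
  lra.
Qed.

Lemma Mt_div_T_tends :
  filterlim (fun E => Mt a b J E / T a b J E) (at_left (E_plus a b q)) (locally (s0 / 2)).
Proof.
  apply filterlim_locally; intros eps; destruct simple_root_lt_double_root as [sg_pos sg_s0].
  assert (k_pos : 0 < k) by (unfold k; lra).
  set (K := PI / 2 * (sqrt s0 / sqrt (2 * k))).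
  assert (K_pos : 0 < K).
  { pose proof PI_RGT_0; apply Rmult_lt_0_compat; [lra|].
    apply Rdiv_lt_0_compat; apply sqrt_lt_R0; lra. }
  destruct (integral_period_kernel_unbounded k (sqrt s0) (K / eps + 1)) as [eta [eta_pos large]];
    [exact k_pos | apply sqrt_lt_R0; lra |].
  refine (filter_imp _ _ _ (T_Mt_near_E_plus (Rmin eps (eta / 2)) _));
    [|apply Rmin_pos; [apply cond_pos | lra]].
  intros E (s1 & s2 & s3 & s1_pos & s12 & s23 & s2_gt & s2_lt & s3_lt & T_eq & Mt_eq).
  pose proof (Rmin_l eps (eta / 2)); pose proof (Rmin_r eps (eta / 2)).
  assert (s2_s0 : s2 <= sqrt s0 ^ 2) by (rewrite pow2_sqrt; lra).
  destruct (integral_sin2_interp_kernel_bounds k s1 s2 s3 k_pos s1_pos s12 s23 (sqrt s0)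
              (sqrt_pos s0) s2_s0) as [Mt_lower Mt_upper].
  rewrite T_eq, Mt_eq; fold K in Mt_lower.
  set (I := RInt (period_kernel k s1 s2 s3) 0 (PI / 2) : R) in *.
  set (IM := RInt (fun t => sin2_interp s1 s2 t * period_kernel k s1 s2 s3 t) 0 (PI / 2) : R) in *.
  assert (I_large : K / eps + 1 <= I) by (apply large; lra).
  assert (K_small : K < eps * I).
  { apply Rlt_le_trans with (eps * (K / eps + 1));
      [|apply Rmult_le_compat_l; [apply Rlt_le, cond_pos | exact I_large]].
    replace (eps * (K / eps + 1)) with (K + eps) by (field; apply Rgt_not_eq, cond_pos).
    pose proof (cond_pos eps); lra. }
  assert (I_pos : 0 < I) by (pose proof (Rdiv_lt_0_compat K eps K_pos (cond_pos eps)); lra).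
  apply Rabs_lt_between'; split.
  - apply (Rmult_lt_reg_r (2 * I)); [lra|].
    replace (IM / (2 * I) * (2 * I)) with IM by (field; lra); nra.
  - apply (Rmult_lt_reg_r (2 * I)); [lra|].
    replace (IM / (2 * I) * (2 * I)) with IM by (field; lra); nra.
Qed.

End NearEPlus.

Theorem proposition3 (a b J q : R) :
  b < 0 -> 0 < a ->
  0 < J -> J < sqrt (4 * a ^ 3 / (27 * b ^ 2)) ->
  0 < q -> q < sqrt (a / 3) -> J = q * (q ^ 2 - a) / b ->
  filterlim (fun E => T a b J E) (at_left (E_plus a b q)) (Rbar_locally p_infty) /\
  filterlim (fun E => Mt a b J E) (at_left (E_plus a b q)) (Rbar_locally p_infty) /\
  filterlim (fun E => Mt a b J E / T a b J E) (at_left (E_plus a b q))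
    (locally ((q ^ 2 - a) / (2 * b))) /\
  filterlim (fun E => Pt a b J E) (at_left (E_plus a b q)) (Rbar_locally p_infty) /\
  filterlim (fun E => Pt a b J E / T a b J E) (at_left (E_plus a b q))
    (locally (q * (q ^ 2 - a) / (2 * b))).
Proof.
  (* The upper bound on J is implied by J = q (q^2 - a)/b with q^2 < a/3. *)
  intros b_neg a_pos J_pos _ q_pos q_lt J_def.
  assert (q_small : q ^ 2 < a / 3).
  { pose proof (sqrt_sqrt (a / 3) ltac:(lra)); pose proof (sqrt_pos (a / 3)); simpl; nra. }
  assert (T_inf := T_tends_to_p_infty a b q b_neg q_pos q_small).
  assert (ratio := Mt_div_T_tends a b q b_neg q_pos q_small).
  rewrite <- J_def in T_inf, ratio.
  assert (T_pos : at_left (E_plus a b q) (fun E => 0 < T a b J E))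
    by (apply T_inf; exists 0; auto).
  replace ((q ^ 2 - a) / (2 * b)) with ((q ^ 2 - a) / b / 2) by (field; lra).
  replace (q * (q ^ 2 - a) / (2 * b)) with (1 / 2 * J) by (rewrite J_def; field; lra).
  repeat split.
  - exact T_inf.
  - apply (filterlim_ext_loc (fun E => Mt a b J E / T a b J E * T a b J E)).
    + refine (filter_imp _ _ _ T_pos); intros E T_E; field; lra.
    + apply (filterlim_mult_p_infty _ _ ((q ^ 2 - a) / b / 2)); [|exact ratio | exact T_inf].
      apply Rdiv_lt_0_compat; [apply Rdiv_neg_neg|]; lra.
  - exact ratio.
  - unfold Pt; apply (filterlim_mult_p_infty (fun _ => 1 / 2 * J) (T a b J) (1 / 2 * J));
      [lra | apply filterlim_const | exact T_inf].
  - apply (filterlim_ext_loc (fun _ => 1 / 2 * J)); [|apply filterlim_const].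
    refine (filter_imp _ _ _ T_pos); intros E T_E; unfold Pt; field; lra.
Qed.
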